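(* Let $C=L_1;\ldots;L_d$ be a sorting network on $n$ channels of depth $d\ge2$ whose last layer is in last layer normal form. Suppose that $(i,i+1)\in L_d$, that channel $i+2$ is used in layer $L_{d-1}$ but not in layer $L_d$, and that channels $i$ and $i+1$ are both unused in layer $L_{d-1}$. Then there is a sorting network $C'=L'_1;\ldots;L'_d$ on $n$ channels of depth $d$ whose last layer is in last layer normal form and such that channels $i+1$ and $i+2$ are both used in layers $L'_{d-1}$ and $L'_d$.
   Context: Channels are numbered $1,\ldots,n$. A comparator network of depth $d$ is a sequence $C=L_1;\ldots;L_d$ of layers; each layer is a set of comparators $(i,j)$ with $1\le i<j\le n$, each channel occurring in at most one comparator of a layer. An input $\bar x\in\{0,1\}^n$ propagates: $\bar x_0=\bar x$, and $\bar x_k$ is obtained from $\bar x_{k-1}$ by, for each $(i,j)\in L_k$, putting the minimum of the values at positions $i,j$ at position $i$ and the maximum at position $j$. The output is $C(\bar x)=\bar x_d$; $C$ is a sorting network if $C(\bar x)$ is sorted non-decreasingly for all $\bar x\in\{0,1\}^n$. A channel is used in a layer if it occurs in some comparator of that layer. The last layer $L_d$ is in last layer normal form if every comparator of $L_d$ is of the form $(i,i+1)$ and there is no $i<n$ with both $i$ and $i+1$ unused in $L_d$. *)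

From mathcomp Require Import all_boot.
Set Implicit Arguments. Unset Strict Implicit. Unset Printing Implicit Defensive.

(* A comparator (i,j) with i < j; a layer is a finite list of comparators;
   a network is the list of its layers L_1; ...; L_d (depth = size). *)
Definition comparator := (nat * nat)%type.
Definition layer := seq comparator.
Definition network := seq layer.

Definition channels (L : layer) : seq nat := flatten [seq [:: c.1; c.2] | c <- L].

Definition used (L : layer) (k : nat) : bool := k \in channels L.

Definition layer_on (n : nat) (L : layer) : bool :=
  all (fun c => (1 <= c.1) && (c.1 < c.2) && (c.2 <= n)) L && uniq (channels L).

Definition network_on (n : nat) (C : network) : bool := all (layer_on n) C.

(* Binary inputs: values at channels 1..n (values elsewhere are irrelevant). *)
Definition input := nat -> bool.

Definition apply_comp (c : comparator) (x : input) : input :=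
  fun k => if k == c.1 then x c.1 && x c.2
           else if k == c.2 then x c.1 || x c.2 else x k.

(* comparators of a layer act on disjoint channels, so the order is irrelevant *)
Definition apply_layer (L : layer) (x : input) : input :=
  foldl (fun y c => apply_comp c y) x L.

Definition run (C : network) (x : input) : input :=
  foldl (fun y L => apply_layer L y) x C.

Definition sorted_on (n : nat) (x : input) : Prop :=
  forall k, 1 <= k -> k < n -> x k <= x k.+1.

Definition sorting_network (n : nat) (C : network) : Prop :=
  network_on n C /\ forall x : input, sorted_on n (run C x).

(* layer L_k (1-indexed) of C *)
Definition layer_at (C : network) (k : nat) : layer := nth [::] C k.-1.

Definition llnf (n : nat) (L : layer) : bool :=
  all (fun c => c.2 == c.1.+1) L &&
  [forall k : 'I_n, (1 <= k) ==> (used L k || used L k.+1)].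

From mathcomp Require Import all_boot.
From mathcomp Require Import zify.
From Stdlib Require Import FunctionalExtensionality.

(* The comparator (i, i+1) of the last layer commutes with the other comparators of that
   layer and, since channels i and i+1 are free in layer d-1, it can be moved up into
   layer d-1.  Its place in the last layer is taken by (i+1, i+2), and by (i-1, i) when
   channel i-1 is free there, which restores last layer normal form.  These new
   comparators act on an output that is already sorted, so they change nothing. *)

Set Implicit Arguments.
Unset Strict Implicit.
Unset Printing Implicit Defensive.

Definition comparator_on (n : nat) (c : comparator) : bool :=
  (1 <= c.1) && (c.1 < c.2) && (c.2 <= n).

Implicit Types (x : input) (c : comparator) (L : layer) (A C : network).

Lemma apply_compC (a b a' b' : nat) (x : input) :
  a != a' -> a != b' -> b != a' -> b != b' ->
  apply_comp (a, b) (apply_comp (a', b') x) = apply_comp (a', b') (apply_comp (a, b) x).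
Proof.
move=> aa' ab' ba' bb'; apply: functional_extensionality => k; rewrite /apply_comp /=.
rewrite (negbTE aa') (negbTE ab') (negbTE ba') (negbTE bb').
rewrite ![_ == a]eq_sym ![_ == b]eq_sym (negbTE aa') (negbTE ab') (negbTE ba') (negbTE bb').
case: (eqVneq k a) => [->|ka]; first by rewrite (negbTE aa') (negbTE ab').
case: (eqVneq k b) => [->|kb]; first by rewrite (negbTE ba') (negbTE bb').
by case: (k == a'); case: (k == b').
Qed.

Lemma apply_layer_cons c L x : apply_layer (c :: L) x = apply_layer L (apply_comp c x).
Proof. by []. Qed.

Lemma apply_layer_cat L L' x : apply_layer (L ++ L') x = apply_layer L' (apply_layer L x).
Proof. exact: foldl_cat. Qed.

Lemma apply_layer_rcons L c x : apply_layer (rcons L c) x = apply_comp c (apply_layer L x).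
Proof. exact: foldl_rcons. Qed.

Lemma run_rcons C L x : run (rcons C L) x = apply_layer L (run C x).
Proof. exact: foldl_rcons. Qed.

Lemma apply_layer_compC L a b x : a \notin channels L -> b \notin channels L ->
  apply_layer L (apply_comp (a, b) x) = apply_comp (a, b) (apply_layer L x).
Proof.
elim: L x => [|[a' b'] L IH] x //=.
rewrite /channels /= !inE !negb_or => /and3P[aa' ab' aL] /and3P[ba' bb' bL].
by rewrite -apply_compC // IH.
Qed.

Lemma apply_comp_id a b x : x a <= x b -> apply_comp (a, b) x = x.
Proof.
move=> le_ab; apply: functional_extensionality => k; rewrite /apply_comp /=.
by case: eqP => [->|_]; [|case: eqP => [->|_]]; move: le_ab; case: (x a); case: (x b).
Qed.

Lemma sorted_on_monotone n x a b : sorted_on n x ->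
  1 <= a -> a <= b -> b <= n -> x a <= x b.
Proof.
move=> sx a_gt0; elim: b => [|b IH]; first by rewrite leqn0 => /eqP a0; rewrite a0 in a_gt0.
rewrite leq_eqVlt => /orP[/eqP-> //|]; rewrite ltnS => le_ab lt_bn.
exact: leq_trans (IH le_ab (ltnW lt_bn)) (sx b (leq_trans a_gt0 le_ab) lt_bn).
Qed.

Lemma apply_layer_sorted n L x : sorted_on n x -> all (comparator_on n) L ->
  apply_layer L x = x.
Proof.
move=> sx; elim: L => [|[a b] L IH] //= /andP[/andP[/andP[a_gt0 lt_ab] le_bn] onL].
by rewrite apply_comp_id ?IH // (sorted_on_monotone sx) // ltnW.
Qed.

Lemma run_move_comparator A L1 s1 s2 L (a b : nat) x :
  a \notin channels s1 -> b \notin channels s1 ->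
  run (rcons (rcons A (rcons L1 (a, b))) (s1 ++ s2 ++ L)) x =
  apply_layer L (run (rcons (rcons A L1) (s1 ++ (a, b) :: s2)) x).
Proof.
move=> a_s1 b_s1; rewrite !run_rcons apply_layer_rcons !apply_layer_cat apply_layer_cons.
by rewrite apply_layer_compC.
Qed.

Lemma used_nil k : used [::] k = false.
Proof. by []. Qed.

Lemma used_cons c L k : used (c :: L) k = [|| k == c.1, k == c.2 | used L k].
Proof. by rewrite /used /channels /= !inE. Qed.

Lemma used_cat L L' k : used (L ++ L') k = used L k || used L' k.
Proof. by rewrite /used /channels map_cat flatten_cat mem_cat. Qed.

Lemma perm_cat_cons (T : eqType) (s1 s2 : seq T) (x : T) :
  perm_eq (s1 ++ x :: s2) (x :: s1 ++ s2).
Proof. by apply/permPl; exact: perm_catCA s1 [:: x] s2. Qed.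

Lemma perm_rcons_cons (T : eqType) (s : seq T) (x : T) : perm_eq (rcons s x) (x :: s).
Proof. by rewrite perm_rcons perm_refl. Qed.

Lemma perm_cat_rotr (T : eqType) (s1 s2 s3 : seq T) :
  perm_eq (s1 ++ s2 ++ s3) (s3 ++ s1 ++ s2).
Proof. by apply/permPl; rewrite catA; exact: perm_catC. Qed.

Lemma perm_channels L L' : perm_eq L L' -> perm_eq (channels L) (channels L').
Proof. by move=> pL; apply/perm_flatten/perm_map. Qed.

Lemma used_perm L L' : perm_eq L L' -> used L =1 used L'.
Proof. by move=> /perm_channels /perm_mem pL k; apply: pL. Qed.

Lemma used_rcons L c k : used (rcons L c) k = used (c :: L) k.
Proof. exact/used_perm/perm_rcons_cons. Qed.

Lemma layer_on_perm n L L' : perm_eq L L' -> layer_on n L = layer_on n L'.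
Proof. by move=> pL; rewrite /layer_on (perm_all _ pL) (perm_uniq (perm_channels pL)). Qed.

Lemma llnf_perm n L L' : perm_eq L L' -> llnf n L = llnf n L'.
Proof.
move=> pL; rewrite /llnf (perm_all _ pL).
by congr (_ && _); apply: eq_forallb => k; rewrite !(used_perm pL).
Qed.

Lemma layer_on_cons n c L : layer_on n (c :: L) =
  [&& comparator_on n c, ~~ used L c.1, ~~ used L c.2 & layer_on n L].
Proof.
rewrite /layer_on /comparator_on /used /channels /= inE negb_or.
case: (ltngtP c.1 c.2) => lt_c; rewrite ?andbF ?andbT //= -!andbA.
by do ![case: (all _ _) | case: (_ \in _)]; rewrite ?andbF.
Qed.

Lemma used_layer_on_bounds n L k : layer_on n L -> used L k -> 1 <= k <= n.
Proof.
case/andP=> /allP onL _ /flatten_mapP[[a b] /onL /andP[/andP[a_gt0 lt_ab] le_bn]].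
rewrite !inE => /orP[]/eqP->; first by rewrite a_gt0 (leq_trans (ltnW lt_ab)).
by rewrite le_bn (leq_trans a_gt0 (ltnW lt_ab)).
Qed.

Definition shift_patch (i : nat) (R : layer) : layer :=
  (i.+1, i.+2) :: (if (1 < i) && ~~ used R i.-1 then [:: (i.-1, i)] else [::]).

Lemma shift_patch_on n i R : 1 <= i -> i.+2 <= n -> all (comparator_on n) (shift_patch i R).
Proof.
move=> i_gt0 le_i2n; rewrite /= /comparator_on /=.
by case: ifP => [/andP[i_gt1 _]|_] /=; lia.
Qed.

Lemma layer_on_shift_patch n i R : layer_on n ((i, i.+1) :: R) -> i.+2 <= n ->
  ~~ used R i.+2 -> layer_on n (shift_patch i R ++ R).
Proof.
rewrite layer_on_cons /= => /and4P[/andP[/andP[i_gt0 _] _] Ri Ri1 onR] le_i2n Ri2.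
rewrite /shift_patch layer_on_cons !used_cat (negbTE Ri1) (negbTE Ri2) /comparator_on /=.
case: ifP => [/andP[i_gt1 Ri']|_] /=; last by rewrite onR andbT; lia.
rewrite !used_cons layer_on_cons (negbTE Ri) Ri' onR /comparator_on /= !andbT orbF.
by rewrite !used_nil; lia.
Qed.

Lemma llnf_shift_patch n i R : llnf n ((i, i.+1) :: R) -> llnf n (shift_patch i R ++ R).
Proof.
rewrite /llnf /= => /andP[/andP[_ adjR] cover]; apply/andP; split.
  rewrite all_cat adjR andbT /= eqxx; case: ifP => //= /andP[i_gt1 _].
  by rewrite prednK ?eqxx // ltnW.
apply/forallP => k; apply/implyP => k_gt0.
have := implyP (forallP cover k) k_gt0.
rewrite !used_cons !used_cat /=.
case: (eqVneq (k : nat).+1 i) => [<- | ki].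
  rewrite ltnS k_gt0 /=; case: (used R k) => /=; first by rewrite !orbT.
  by rewrite !used_cons eqxx !orbT.
case: ifP => _; rewrite ?used_cons used_nil;
by case: (used R k); case: (used R k.+1); rewrite ?orbT //=; lia.
Qed.

Lemma network_on_rcons2 n A L1 L2 :
  network_on n (rcons (rcons A L1) L2) = [&& network_on n A, layer_on n L1 & layer_on n L2].
Proof.
by rewrite /network_on !all_rcons; case: (layer_on n L2); rewrite /= ?andbT ?andbF // andbC.
Qed.

Lemma sorting_network_move_comparator n A L1 s1 s2 i :
  sorting_network n (rcons (rcons A L1) (s1 ++ (i, i.+1) :: s2)) ->
  used L1 i.+2 -> ~~ used L1 i -> ~~ used L1 i.+1 -> ~~ used (s1 ++ s2) i.+2 ->
  sorting_network n
    (rcons (rcons A (rcons L1 (i, i.+1))) (s1 ++ s2 ++ shift_patch i (s1 ++ s2))).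
Proof.
rewrite /sorting_network network_on_rcons2 (layer_on_perm _ (perm_cat_cons _ _ _)).
move=> [/and3P[onA onL1 onL2] sortC] L1_i2 L1_i L1_i1 R_i2.
move: (onL2); rewrite layer_on_cons /= => /and4P[cmp_i R_i R_i1 _].
have i_gt0 : 1 <= i by case/andP: cmp_i => /andP[].
have i2_le_n : i.+2 <= n by case/andP: (used_layer_on_bounds onL1 L1_i2).
split.
  rewrite network_on_rcons2 onA (layer_on_perm _ (perm_cat_rotr _ _ _)).
  rewrite layer_on_shift_patch //.
  by rewrite (layer_on_perm _ (perm_rcons_cons _ _)) layer_on_cons L1_i L1_i1 onL1 cmp_i.
move=> x; rewrite run_move_comparator ?(apply_layer_sorted (n := n)) ?shift_patch_on //.
  by apply: contra R_i; rewrite used_cat /used => ->.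
by apply: contra R_i1; rewrite used_cat /used => ->.
Qed.

Lemma layer_at_rcons2 A L1 L2 :
  layer_at (rcons (rcons A L1) L2) (size A).+2 = L2 /\
  layer_at (rcons (rcons A L1) L2) (size A).+1 = L1.
Proof. by rewrite /layer_at /= !nth_rcons !size_rcons ltnn eqxx ltnSn ltnn eqxx. Qed.

Theorem lemma8 (n d : nat) (C : network) (i : nat) :
  sorting_network n C -> size C = d -> 2 <= d ->
  llnf n (layer_at C d) ->
  (i, i.+1) \in layer_at C d ->
  used (layer_at C d.-1) i.+2 ->
  ~~ used (layer_at C d) i.+2 ->
  ~~ used (layer_at C d.-1) i ->
  ~~ used (layer_at C d.-1) i.+1 ->
  exists C' : network,
    [/\ sorting_network n C', size C' = d, llnf n (layer_at C' d),
        used (layer_at C' d.-1) i.+1 && used (layer_at C' d.-1) i.+2 &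
        used (layer_at C' d) i.+1 && used (layer_at C' d) i.+2].
Proof.
case/lastP: C => [|C0 L2]; first by move=> _ <-.
case/lastP: C0 => [|A L1]; first by move=> _ <-.
move=> + <- _; rewrite !size_rcons /=; have [-> ->] := layer_at_rcons2 A L1 L2.
move=> sortC llnfL2 c_in L1_i2 L2_i2 L1_i L1_i1.
case/splitPr: c_in sortC llnfL2 L2_i2 => s1 s2 sortC llnfL2 L2_i2.
set R := s1 ++ s2.
have R_i2 : ~~ used R i.+2.
  apply: contra L2_i2; rewrite (used_perm (perm_cat_cons _ _ _)) used_cons.
  by move=> ->; rewrite !orbT.
set L1' := rcons L1 (i, i.+1); set L2' := s1 ++ s2 ++ shift_patch i R.
exists (rcons (rcons A L1') L2').
rewrite !size_rcons /=; have [-> ->] := layer_at_rcons2 A L1' L2'.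
have permL2' := perm_cat_rotr s1 s2 (shift_patch i R).
split => //.
- exact: sorting_network_move_comparator.
- rewrite (llnf_perm _ permL2') llnf_shift_patch //.
  by rewrite -(llnf_perm _ (perm_cat_cons _ _ _)).
- by rewrite !used_rcons !used_cons L1_i2 /= eqxx !orbT.
- by rewrite !(used_perm permL2') !used_cat !used_cons /= !eqxx !orbT.
Qed.
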